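(* Let $Y$ be a positive integrable random variable with mean $m$ and $X=Y-m$. In each of the following cases $X$ is heavy on left: (i) $Y$ has a Gamma distribution with parameters $a,\lambda>0$ (in particular an exponential distribution with parameter $\lambda>0$); (ii) $Y=a\exp(Z)$ with $a>0$ and $Z$ exponential with parameter $\lambda>0$ (Pareto distribution), whenever $Y$ is integrable; (iii) $Y=\exp(Z)$ with $Z\sim\mathcal{N}(\mu,\sigma^2)$, $\mu\in\mathbb{R}$, $\sigma^2>0$ (log-normal distribution).
   Context: For $a>0$ let $T_a(X)=\min(|X|,a)\,\mathrm{sign}(X)$. An integrable random variable $X$ is called heavy on left if $\mathbb{E}[X]=0$ and $\mathbb{E}[T_a(X)]\le0$ for all $a>0$. *)

From Stdlib Require Import Reals Lra.
Open Scope R_scope.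

Definition sgn (x : R) : R :=
  if Rlt_dec 0 x then 1 else if Rlt_dec x 0 then -1 else 0.

Definition T (a x : R) : R := Rmin (Rabs x) a * sgn x.

(* improper Riemann integral over (0, +oo): limit of int_u^v as u -> 0+, v -> +oo *)
Definition int_pos (f : R -> R) (l : R) : Prop :=
  (forall u v, 0 < u -> u <= v -> inhabited (Riemann_integrable f u v)) /\
  forall eps, 0 < eps -> exists d, 0 < d /\ exists B,
    forall u v (pr : Riemann_integrable f u v),
      0 < u -> u < d -> B < v -> u <= v -> Rabs (RiemannInt pr - l) < eps.

Definition int_R (f : R -> R) (l : R) : Prop :=
  (forall u v, u <= v -> inhabited (Riemann_integrable f u v)) /\
  forall eps, 0 < eps -> exists A,
    forall u v (pr : Riemann_integrable f u v),
      u < - A -> A < v -> u <= v -> Rabs (RiemannInt pr - l) < eps.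

(* Law of a random variable V = h(Z), Z having density p on (0,+oo) (resp. on R):
   expect g l  <->  g(V) is integrable and E[g(V)] = l. *)
Definition expect_pos (p h : R -> R) (g : R -> R) (l : R) : Prop :=
  (exists L, int_pos (fun z => Rabs (g (h z)) * p z) L) /\
  int_pos (fun z => g (h z) * p z) l.

Definition expect_R (p h : R -> R) (g : R -> R) (l : R) : Prop :=
  (exists L, int_R (fun z => Rabs (g (h z)) * p z) L) /\
  int_R (fun z => g (h z) * p z) l.

Definition heavy_on_left (E : (R -> R) -> R -> Prop) : Prop :=
  E (fun x => x) 0 /\
  forall a, 0 < a -> exists l, E (T a) l /\ l <= 0.

Definition gamma_density (C a lam : R) (y : R) : R :=
  C * Rpower y (a - 1) * exp (- lam * y).
Definition exp_density (lam : R) (z : R) : R := lam * exp (- lam * z).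
Definition normal_density (mu s2 : R) (z : R) : R :=
  / sqrt (2 * PI * s2) * exp (- (z - mu) ^ 2 / (2 * s2)).

From Stdlib Require Import Reals Lra Classical FunctionalExtensionality.
Open Scope R_scope.

(* Let Z have a density p and X = h(Z) - m with E[X] = 0.
   For a > 0 and any slope c, E[T_a X] = E[T_a X - c X].  On a window
   [u, v] of integration we pair the point where X = -t with the point where
   X = t (0 <= t <= s), as long as X stays in [-s, s]; the sum of the two
   contributions is (T_a t - c t) times w t, where w t = density of -X minus
   density of X at t.  In all three models w changes sign at most once, from
   + to -, and one can choose c in [0,1] with T_a t - c t >= 0 before the sign
   change and <= 0 after it (and beyond s).  Hence on every large window
   int T_a(X) p <= c int X p, and letting the window grow gives
   E[T_a X] <= c E[X] = 0. *)

(* Each rule leaves the value of the derivative as an equation to be closed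
   by [ring]/[field], so that [deriv_auto] can chain them freely. *)
Lemma dl_plus f g x df dg l : derivable_pt_lim f x df -> derivable_pt_lim g x dg ->
  l = df + dg -> derivable_pt_lim (fun y => f y + g y) x l.
Proof. intros; subst; apply (derivable_pt_lim_plus f g); auto. Qed.

Lemma dl_minus f g x df dg l : derivable_pt_lim f x df -> derivable_pt_lim g x dg ->
  l = df - dg -> derivable_pt_lim (fun y => f y - g y) x l.
Proof. intros; subst; apply (derivable_pt_lim_minus f g); auto. Qed.

Lemma dl_mult f g x df dg l : derivable_pt_lim f x df -> derivable_pt_lim g x dg ->
  l = df * g x + f x * dg -> derivable_pt_lim (fun y => f y * g y) x l.
Proof. intros; subst; apply (derivable_pt_lim_mult f g); auto. Qed.

Lemma dl_comp f g x df dg l : derivable_pt_lim f x df -> derivable_pt_lim g (f x) dg ->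
  l = dg * df -> derivable_pt_lim (fun y => g (f y)) x l.
Proof. intros; subst; apply (derivable_pt_lim_comp f g); auto. Qed.

Lemma dl_opp f x df l : derivable_pt_lim f x df -> l = - df ->
  derivable_pt_lim (fun y => - f y) x l.
Proof. intros; subst; apply (derivable_pt_lim_opp f); auto. Qed.

Lemma dl_const c x l : l = 0 -> derivable_pt_lim (fun _ => c) x l.
Proof. intros; subst; apply (derivable_pt_lim_const c). Qed.

Lemma dl_id x l : l = 1 -> derivable_pt_lim (fun y => y) x l.
Proof. intros; subst; apply derivable_pt_lim_id. Qed.

Lemma dl_exp f x df l : derivable_pt_lim f x df -> l = exp (f x) * df ->
  derivable_pt_lim (fun y => exp (f y)) x l.
Proof. intros; subst; apply (derivable_pt_lim_comp f exp); auto; apply derivable_pt_lim_exp. Qed.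

Lemma dl_ln f x df l : derivable_pt_lim f x df -> 0 < f x -> l = / f x * df ->
  derivable_pt_lim (fun y => ln (f y)) x l.
Proof. intros; subst; apply (derivable_pt_lim_comp f ln); auto; apply derivable_pt_lim_ln; auto. Qed.

Ltac deriv_auto := repeat (first
  [ eapply dl_const; reflexivity | eapply dl_id; reflexivity
  | eapply dl_minus | eapply dl_plus | eapply dl_mult | eapply dl_exp
  | eapply dl_ln | eapply dl_opp ]).

Lemma cont_of_deriv f x l : derivable_pt_lim f x l -> continuity_pt f x.
Proof. intros D. apply derivable_continuous_pt. exists l. exact D. Qed.

Lemma cont_const c x : continuity_pt (fun _ => c) x.
Proof. apply (continuity_pt_const (fun _ => c)). intros a b; reflexivity. Qed.

Lemma le_exp x y : x <= y -> exp x <= exp y.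
Proof. intros [H|H]; [left; apply exp_increasing; lra | subst; lra]. Qed.

Lemma le_ln x y : 0 < x -> x <= y -> ln x <= ln y.
Proof. intros hx [H|H]; [left; apply ln_increasing; lra | subst; lra]. Qed.

(* A closed form of T_a without case distinction; it gives continuity and
   oddness at once. *)
Lemma T_abs_form a x : 0 < a -> T a x = (Rabs (x + a) - Rabs (x - a)) / 2.
Proof.
  intros Ha. unfold T, sgn, Rmin.
  destruct (Rlt_dec 0 x); [|destruct (Rlt_dec x 0)]; destruct (Rle_dec (Rabs x) a);
  repeat match goal with |- context [Rabs ?e] => destruct (Rcase_abs e);
    [rewrite (Rabs_left e) by lra | rewrite (Rabs_right e) by lra] end; try lra;
  repeat match goal with H : context [Rabs ?e] |- _ => destruct (Rcase_abs e);
    [rewrite (Rabs_left e) in H by lra | rewrite (Rabs_right e) in H by lra] end; lra.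
Qed.

Ltac T_cases a :=
  rewrite ?(T_abs_form a) by auto; unfold Rmin;
  repeat match goal with |- context [Rabs ?e] => destruct (Rcase_abs e);
    [rewrite (Rabs_left e) by lra | rewrite (Rabs_right e) by lra] end;
  repeat match goal with |- context [Rle_dec ?x ?y] => destruct (Rle_dec x y) end; lra.

Lemma T_cont a x : 0 < a -> continuity_pt (T a) x.
Proof.
  intros Ha.
  assert (Hf : continuity_pt (fun y => (Rabs (y + a) - Rabs (y - a)) / 2) x).
  { unfold Rdiv. apply (continuity_pt_mult _ (fun _ => / 2)); [|apply cont_const].
    apply continuity_pt_minus; apply (continuity_pt_comp _ Rabs);
      try apply Rcontinuity_abs; eapply cont_of_deriv; deriv_auto; reflexivity. }
  replace (T a) with (fun y => (Rabs (y + a) - Rabs (y - a)) / 2); auto.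
  apply functional_extensionality; intros; rewrite T_abs_form; auto.
Qed.

Lemma T_abs_le a x : 0 < a -> Rabs (T a x) <= Rabs x.
Proof. intros Ha. T_cases a. Qed.

Lemma T_odd a x : 0 < a -> T a (- x) = - T a x.
Proof. intros Ha. T_cases a. Qed.

Lemma T_le_id a x : 0 < a -> 0 <= x -> T a x <= x.
Proof. intros Ha Hx. T_cases a. Qed.

Lemma T_nonneg a x : 0 < a -> 0 <= x -> T a x = Rmin x a.
Proof. intros Ha Hx. T_cases a. Qed.

Lemma truncation_slope a sg : 0 < a -> 0 <= sg ->
  exists c, 0 <= c <= 1 /\ (forall t, 0 <= t <= sg -> c * t <= T a t)
   /\ (forall t, sg <= t -> T a t <= c * t).
Proof.
  intros Ha Hs. destruct (Rle_dec sg a) as [H|H].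
  - exists 1. repeat split; try lra; intros t Ht; rewrite T_nonneg by lra; T_cases a.
  - assert (Hc : 0 <= a / sg <= 1).
    { split; [apply Rlt_le, Rdiv_lt_0_compat; lra|].
      apply Rmult_le_reg_r with sg; [lra|]. field_simplify; lra. }
    exists (a / sg). split; auto. split; intros t Ht; rewrite T_nonneg by lra;
      unfold Rmin; destruct (Rle_dec t a).
    + assert (a / sg * t <= 1 * t) by (apply Rmult_le_compat_r; lra). lra.
    + assert (a / sg * t <= a / sg * sg) by (apply Rmult_le_compat_l; lra).
      replace (a / sg * sg) with a in * by (field; lra). lra.
    + lra.
    + assert (a / sg * sg <= a / sg * t) by (apply Rmult_le_compat_l; lra).
      replace (a / sg * sg) with a in * by (field; lra). lra.
Qed.

Lemma RI_FTC f P a b (pr : Riemann_integrable f a b) : a <= b ->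
  (forall x, a <= x <= b -> continuity_pt f x) ->
  (forall x, a <= x <= b -> derivable_pt_lim P x (f x)) ->
  RiemannInt pr = P b - P a.
Proof.
  intros hab C D.
  rewrite (RiemannInt_P20 hab (FTC_P1 hab C) pr).
  set (Q := primitive hab (FTC_P1 hab C)).
  destruct (Req_dec a b) as [<-|NE]; [ring|].
  destruct (MVT_cor2 (fun x => P x - Q x) (fun x => 0) a b) as [c [Hc _]]; [lra| |lra].
  intros c Hc. eapply dl_minus; [apply D; lra | apply (RiemannInt_P28 (f:=f) hab C Hc) | ring].
Qed.

Lemma deriv_nonpos_decr F F' a b : a <= b ->
  (forall x, a <= x <= b -> derivable_pt_lim F x (F' x)) ->
  (forall x, a <= x <= b -> F' x <= 0) -> F b <= F a.
Proof.
  intros hab D N. destruct (Req_dec a b) as [<-|NE]; [lra|].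
  destruct (MVT_cor2 F F' a b) as [c [Hc Hc2]]; [lra|auto|].
  assert (F' c <= 0) by (apply N; lra). nra.
Qed.

Lemma deriv_zero_const F a b :
  (forall x, Rmin a b <= x <= Rmax a b -> derivable_pt_lim F x 0) -> F b = F a.
Proof.
  intros D. destruct (MVT_abs F (fun _ => 0) a b D) as [c [Hc _]].
  rewrite Rabs_R0, Rmult_0_l in Hc. destruct (Req_dec (F b - F a) 0); [lra|].
  exfalso. apply (Rabs_no_R0 _ H Hc).
Qed.

Lemma RI_le_const f a b k (pr : Riemann_integrable f a b) : a <= b ->
  (forall x, a < x < b -> f x <= k) -> RiemannInt pr <= k * (b - a).
Proof.
  intros hab H. rewrite <- (RiemannInt_P15 (RiemannInt_P14 a b k)).
  apply RiemannInt_P19; auto.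
Qed.

Lemma RI_ge_const f a b k (pr : Riemann_integrable f a b) : a <= b ->
  (forall x, a < x < b -> k <= f x) -> k * (b - a) <= RiemannInt pr.
Proof.
  intros hab H. rewrite <- (RiemannInt_P15 (RiemannInt_P14 a b k)).
  apply RiemannInt_P19; auto.
Qed.

Lemma RI_window_mono g u' u v v' (pr : Riemann_integrable g u v)
  (pr' : Riemann_integrable g u' v') :
  u' <= u -> u <= v -> v <= v' -> (forall x, u' < x < v' -> 0 <= g x) ->
  RiemannInt pr <= RiemannInt pr'.
Proof.
  intros h1 h2 h3 Hg.
  assert (p1 : Riemann_integrable g u' u) by (apply (RiemannInt_P22 pr'); lra).
  assert (p2 : Riemann_integrable g u v') by (apply (RiemannInt_P23 pr'); lra).
  assert (p3 : Riemann_integrable g v v') by (apply (RiemannInt_P23 p2); lra).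
  rewrite <- (RiemannInt_P25 p1 p2 pr'), <- (RiemannInt_P25 pr p3 p2) by lra.
  assert (0 * (u - u') <= RiemannInt p1) by (apply RI_ge_const; [lra|intros; apply Hg; lra]).
  assert (0 * (v' - v) <= RiemannInt p3) by (apply RI_ge_const; [lra|intros; apply Hg; lra]).
  lra.
Qed.

(** * The pairing argument *)

(* The points l t <= r t (0 <= t <= s) sweep [u, r s] from
   l 0 = r 0.  The integral of k over [u, r s] is Q (r s) - Q (l s) for a
   primitive Q, and t |-> Q (r t) - Q (l t) is nonincreasing from 0 when the
   paired contributions k (r t) r' t - k (l t) l' t are nonpositive; if
   moreover k <= 0 on [r s, v], then the integral of k over [u, v] is <= 0. *)
Lemma paired_integral_nonpos k l r l' r' u v s (pr : Riemann_integrable k u v) :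
  0 <= s -> l 0 = r 0 -> l s = u -> r s <= v ->
  (forall t, 0 <= t <= s -> u <= l t <= r s /\ u <= r t <= r s) ->
  (forall t, 0 <= t <= s -> derivable_pt_lim l t (l' t) /\ derivable_pt_lim r t (r' t)) ->
  (forall z, u <= z <= v -> continuity_pt k z) ->
  (forall t, 0 <= t <= s -> k (r t) * r' t - k (l t) * l' t <= 0) ->
  (forall z, r s <= z <= v -> k z <= 0) ->
  RiemannInt pr <= 0.
Proof.
  intros hs h0 hls hrs Rg Dv Ck Dn Tl.
  assert (huw : u <= r s) by (destruct (Rg s) as [_ ?]; lra).
  assert (C' : forall x, u <= x <= r s -> continuity_pt k x) by (intros; apply Ck; lra).
  set (Q := primitive huw (FTC_P1 huw C')).
  assert (DQ : forall x, u <= x <= r s -> derivable_pt_lim Q x (k x))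
    by (intros x Hx; apply (RiemannInt_P28 (f:=k) huw C' Hx)).
  assert (Hswept : Q (r s) - Q (l s) <= Q (r 0) - Q (l 0)).
  { apply (deriv_nonpos_decr (fun t => Q (r t) - Q (l t))
      (fun t => k (r t) * r' t - k (l t) * l' t)); auto.
    intros t Ht. destruct (Dv t Ht) as [Dl Dr]. destruct (Rg t Ht) as [[? ?] [? ?]].
    eapply dl_minus; (eapply dl_comp; [eauto | apply DQ; lra | reflexivity]) || ring. }
  rewrite h0, hls in Hswept.
  assert (pr1 : Riemann_integrable k u (r s)) by (apply (RiemannInt_P22 pr); lra).
  assert (pr2 : Riemann_integrable k (r s) v) by (apply (RiemannInt_P23 pr); lra).
  rewrite <- (RiemannInt_P25 pr1 pr2 pr) by lra.
  rewrite (RiemannInt_P20 huw (FTC_P1 huw C') pr1). fold Q.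
  assert (RiemannInt pr2 <= 0 * (v - r s)) by (apply RI_le_const; [lra|intros; apply Tl; lra]).
  lra.
Qed.

(* w changes sign on [0, s] at most once, from >= 0 to <= 0. *)
Definition single_crossing (w : R -> R) (s : R) : Prop :=
  forall t1 t2, 0 <= t1 -> t1 <= t2 -> t2 <= s -> w t2 > 0 -> w t1 >= 0.

Lemma single_crossing_point w s : 0 <= s -> single_crossing w s ->
  exists sg, 0 <= sg <= s /\ (forall t, 0 <= t < sg -> 0 <= w t)
                           /\ (forall t, sg < t <= s -> w t <= 0).
Proof.
  intros Hs Cr.
  destruct (classic (exists t, 0 <= t <= s /\ w t < 0)) as [[t0 [Ht0 Hw0]]|NEx].
  2: { exists s. repeat split; try lra; intros t Ht.
       - apply Rnot_lt_le. intro. apply NEx. exists t. split; [lra|auto].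
       - lra. }
  (* sg is the infimum of the negativity set, i.e. minus the sup of its opposite *)
  set (E := fun x => exists t, 0 <= t <= s /\ w t < 0 /\ x = - t).
  destruct (completeness E) as [M [HM1 HM2]].
  { exists 0. intros x [t [? [? ->]]]. lra. }
  { exists (- t0). exists t0; auto. }
  assert (Hneg : forall t, 0 <= t <= s -> w t < 0 -> - M <= t).
  { intros t Ht Hw. assert (E (- t)) as HE by (exists t; auto). apply HM1 in HE. lra. }
  assert (HM0 : M <= 0) by (apply HM2; intros x [t [? [? ->]]]; lra).
  assert (HMt0 : - M <= t0) by (apply Hneg; auto).
  exists (- M). split; [lra|split].
  - intros t Ht. apply Rnot_lt_le. intro Hw. assert (- M <= t) by (apply Hneg; lra). lra.
  - intros t Ht. apply Rnot_lt_le. intro Hw.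
    (* a negative value below t would contradict the crossing property at t *)
    assert (Hsmall : exists t', 0 <= t' <= s /\ w t' < 0 /\ t' < t).
    { apply NNPP. intro N. assert (M <= - t); [|lra].
      apply HM2. intros x [t' [H1 [H2 ->]]]. apply Ropp_le_contravar.
      apply Rnot_lt_le. intro. apply N. exists t'. auto. }
    destruct Hsmall as [t' [? [? ?]]]. assert (w t' >= 0) by (apply (Cr t' t); lra). lra.
Qed.

Lemma crossing_slope a w s : 0 < a -> 0 <= s -> single_crossing w s ->
  exists c, 0 <= c <= 1 /\ (forall t, 0 <= t <= s -> 0 <= (T a t - c * t) * w t)
    /\ (forall x, s <= x -> T a x - c * x <= 0).
Proof.
  intros Ha Hs Cr.
  destruct (single_crossing_point w s Hs Cr) as [sg [Hsg [Wl Wr]]].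
  destruct (truncation_slope a sg Ha (proj1 Hsg)) as [c [Hc [Sl Sr]]].
  exists c. split; auto. split.
  - intros t Ht. destruct (Rtotal_order t sg) as [Hlt|[->|Hgt]].
    + assert (c * t <= T a t) by (apply Sl; lra).
      apply Rmult_le_pos; [lra | apply Wl; lra].
    + assert (c * sg <= T a sg) by (apply Sl; lra). assert (T a sg <= c * sg) by (apply Sr; lra).
      replace (T a sg - c * sg) with 0 by lra. lra.
    + assert (T a t <= c * t) by (apply Sr; lra).
      assert (w t <= 0) by (apply Wr; lra). nra.
  - intros x Hx. assert (T a x <= c * x) by (apply Sr; lra). lra.
Qed.

Lemma single_crossing_of_log_ratio w q G s :
  (forall t, 0 <= t <= s -> 0 < q t /\ w t = q t * (exp (G t) - 1)) ->
  single_crossing G s -> single_crossing w s.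
Proof.
  intros Hw HG t1 t2 h1 h12 h2 Hw2.
  destruct (Hw t1 ltac:(lra)) as [q1 ->], (Hw t2 ltac:(lra)) as [q2 E2]. rewrite E2 in Hw2.
  assert (G t2 > 0).
  { apply Rnot_le_gt. intro. assert (exp (G t2) <= exp 0) by (apply le_exp; auto).
    rewrite exp_0 in *. nra. }
  assert (exp 0 <= exp (G t1)) by (apply le_exp, Rge_le, (HG t1 t2); auto).
  rewrite exp_0 in *. nra.
Qed.

Lemma single_crossing_ext w1 w2 s : (forall t, 0 <= t <= s -> w1 t = w2 t) ->
  single_crossing w1 s -> single_crossing w2 s.
Proof.
  intros E H t1 t2 h1 h12 h2. rewrite <- (E t1), <- (E t2) by lra. apply H; auto.
Qed.

Lemma single_crossing_of_nonneg w s : (forall t, 0 <= t <= s -> 0 <= w t) ->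
  single_crossing w s.
Proof. intros H t1 t2 h1 h12 h2 _. apply Rle_ge, H; lra. Qed.

Definition window_bound (p h : R -> R) (m a u v : R) : Prop :=
  forall (pF : Riemann_integrable (fun z => T a (h z - m) * p z) u v)
         (pG : Riemann_integrable (fun z => (h z - m) * p z) u v),
  exists c, 0 <= c <= 1 /\ RiemannInt pF <= c * RiemannInt pG.

(* If X >= 0 on the window, c = 1 works since T_a x <= x for x >= 0. *)
Lemma window_bound_nonneg p h m a u v : 0 < a -> u <= v ->
  (forall z, u <= z <= v -> m <= h z /\ 0 <= p z) -> window_bound p h m a u v.
Proof.
  intros ha huv H pF pG. exists 1. split; [lra|]. rewrite Rmult_1_l.
  apply RiemannInt_P19; auto. intros z hz. destruct (H z ltac:(lra)).
  assert (T a (h z - m) <= h z - m) by (apply T_le_id; lra). nra.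
Qed.

(* The weight w t = - (p (r t) r' t + p (l t) l' t), i.e. the density of -X
   minus that of X at t, is assumed to change sign at most once from + to -.
   Then [crossing_slope] provides c and [paired_integral_nonpos] applies to
   T_a X - c X. *)
Lemma window_bound_paired p h m a u v s l r l' r' : 0 < a -> 0 <= s ->
  l 0 = r 0 -> l s = u -> r s <= v ->
  (forall t, 0 <= t <= s -> u <= l t <= r s /\ u <= r t <= r s) ->
  (forall t, 0 <= t <= s -> derivable_pt_lim l t (l' t) /\ derivable_pt_lim r t (r' t)) ->
  (forall t, 0 <= t <= s -> h (l t) = m - t /\ h (r t) = m + t) ->
  (forall z, u <= z <= v -> continuity_pt p z /\ continuity_pt h z /\ 0 <= p z) ->
  (forall z, r s <= z <= v -> s <= h z - m) ->
  single_crossing (fun t => - (p (r t) * r' t + p (l t) * l' t)) s ->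
  window_bound p h m a u v.
Proof.
  intros ha hs h0 hls hrs Rg Dv Hh Cp Hrs Cr pF pG.
  destruct (crossing_slope a (fun t => - (p (r t) * r' t + p (l t) * l' t)) s ha hs Cr)
    as [c [Hc [S1 S2]]].
  exists c. split; auto.
  set (k := fun z => T a (h z - m) * p z + (- c) * ((h z - m) * p z)).
  assert (pk : Riemann_integrable k u v) by (apply RiemannInt_P10; auto).
  assert (RiemannInt pk = RiemannInt pF + - c * RiemannInt pG) by apply RiemannInt_P13.
  enough (RiemannInt pk <= 0) by lra.
  apply (paired_integral_nonpos k l r l' r' u v s pk); auto.
  - intros z hz. destruct (Cp z hz) as [C1 [C2 _]]. unfold k.
    assert (CX : continuity_pt (fun z => h z - m) z)
      by (apply continuity_pt_minus; auto; apply cont_const).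
    apply continuity_pt_plus; apply continuity_pt_mult; auto.
    + apply (continuity_pt_comp _ (T a)); auto; apply T_cont; auto.
    + apply cont_const.
    + apply continuity_pt_mult; auto.
  - intros t ht. destruct (Hh t ht) as [E1 E2]. unfold k. rewrite E1, E2.
    replace (m - t - m) with (- t) by ring. replace (m + t - m) with t by ring.
    rewrite T_odd by auto. specialize (S1 t ht).
    replace ((T a t * p (r t) + - c * (t * p (r t))) * r' t
             - (- T a t * p (l t) + - c * (- t * p (l t))) * l' t)
      with (- ((T a t - c * t) * - (p (r t) * r' t + p (l t) * l' t))) by ring.
    lra.
  - intros z hz. unfold k.
    assert (0 <= p z) by (apply Cp; destruct (Rg s) as [_ ?]; lra).
    assert (T a (h z - m) - c * (h z - m) <= 0) by (apply S2; apply Hrs; auto). nra.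
Qed.

(** * Improper integrals along a system of growing windows *)

(* Both improper integrals of the statement ([int_pos] over (0,+oo) and
   [int_R] over R) are limits of Riemann integrals over windows [u, v] that
   eventually contain any given window; their theory is developed once. *)
Record window_system := {
  ws_dom : R -> Prop;                  (* admissible left endpoints *)
  ws_ev : (R -> R -> Prop) -> Prop;    (* "for all large enough windows" *)
  ws_dom_up : forall x y, ws_dom x -> x <= y -> ws_dom y;
  ws_ev_mono : forall P Q : R -> R -> Prop,
    (forall u v, P u v -> Q u v) -> ws_ev P -> ws_ev Q;
  ws_ev_and : forall P Q, ws_ev P -> ws_ev Q -> ws_ev (fun u v => P u v /\ Q u v);
  ws_ev_dom : forall P, ws_ev P -> ws_ev (fun u v => ws_dom u /\ P u v);
  ws_ev_cofinal : forall u0 v0, ws_dom u0 -> ws_ev (fun u v => u <= u0 /\ v0 <= v);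
  ws_ev_witness : forall P, ws_ev P -> exists u v, u <= v /\ P u v }.

Section Improper.
Variable W : window_system.

Definition improper (f : R -> R) (l : R) : Prop :=
  (forall u v, ws_dom W u -> u <= v -> inhabited (Riemann_integrable f u v)) /\
  forall eps, 0 < eps -> ws_ev W (fun u v => u <= v ->
    forall pr : Riemann_integrable f u v, Rabs (RiemannInt pr - l) < eps).

Definition expect (p h g : R -> R) (l : R) : Prop :=
  (exists L, improper (fun z => Rabs (g (h z)) * p z) L) /\
  improper (fun z => g (h z) * p z) l.

Lemma improper_ext f g l : (forall z, f z = g z) -> improper f l -> improper g l.
Proof. intros H I. replace g with f; auto. apply functional_extensionality; auto. Qed.

Lemma improper_lin f g k l1 l2 : improper f l1 -> improper g l2 ->
  improper (fun z => f z + k * g z) (l1 + k * l2).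
Proof.
  intros [If Lf] [Ig Lg]. split.
  - intros u v hu huv. destruct (If u v hu huv) as [pf], (Ig u v hu huv) as [pg].
    constructor. apply RiemannInt_P10; auto.
  - intros eps heps. set (e := eps / (2 * (1 + Rabs k))).
    assert (he : 0 < e) by (unfold e; pose proof (Rabs_pos k); apply Rdiv_lt_0_compat; lra).
    generalize (ws_ev_dom W _ (ws_ev_and W _ _ (Lf e he) (Lg e he))).
    apply ws_ev_mono. intros u v [hu [Hf Hg]] huv pr.
    destruct (If u v hu huv) as [pf], (Ig u v hu huv) as [pg].
    rewrite (RiemannInt_P13 pf pg pr).
    specialize (Hf huv pf). specialize (Hg huv pg).
    replace (RiemannInt pf + k * RiemannInt pg - (l1 + k * l2))
      with ((RiemannInt pf - l1) + k * (RiemannInt pg - l2)) by ring.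
    eapply Rle_lt_trans; [apply Rabs_triang|]. rewrite Rabs_mult.
    assert (Rabs k * Rabs (RiemannInt pg - l2) <= Rabs k * e)
      by (apply Rmult_le_compat_l; [apply Rabs_pos|lra]).
    assert (e * (1 + Rabs k) = eps / 2) by (unfold e; field; pose proof (Rabs_pos k); lra).
    nra.
Qed.

Lemma improper_RI_le g L u v (pr : Riemann_integrable g u v) : improper g L ->
  (forall z, ws_dom W z -> 0 <= g z) -> ws_dom W u -> u <= v -> RiemannInt pr <= L.
Proof.
  intros [Ig Lg] Hg hu huv. apply Rnot_lt_le. intro N.
  destruct (ws_ev_witness W _ (ws_ev_dom W _
     (ws_ev_and W _ _ (ws_ev_cofinal W u v hu) (Lg _ (proj2 (Rlt_0_minus _ _) N)))))
    as [u' [v' [huv' [hu' [[h1 h2] Hl]]]]].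
  destruct (Ig u' v' hu' huv') as [pr'].
  specialize (Hl huv' pr').
  assert (RiemannInt pr <= RiemannInt pr').
  { apply RI_window_mono; auto. intros; apply Hg, (ws_dom_up W u'); auto; lra. }
  apply Rabs_def2 in Hl. lra.
Qed.

(* Existence of the improper integral of a function squeezed between 0 and an
   integrable function: the limit is the supremum of the window integrals. *)
Lemma improper_of_nonneg_dominated f g L :
  (forall u v, ws_dom W u -> u <= v -> inhabited (Riemann_integrable f u v)) ->
  (forall z, ws_dom W z -> 0 <= f z <= g z) -> improper g L -> exists l, improper f l.
Proof.
  intros If Hfg Ig.
  set (E := fun x => exists u v (pr : Riemann_integrable f u v),
                       ws_dom W u /\ u <= v /\ x = RiemannInt pr).
  assert (bE : bound E).
  { exists L. intros x [u [v [pr [hu [huv ->]]]]].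
    destruct (proj1 Ig u v hu huv) as [pg].
    apply Rle_trans with (RiemannInt pg).
    - apply RiemannInt_P19; auto. intros z hz. apply Hfg, (ws_dom_up W u); auto; lra.
    - apply (improper_RI_le g L u v pg Ig); auto. intros z hz; specialize (Hfg z hz); lra. }
  destruct (ws_ev_witness W _ (ws_ev_dom W _ (proj2 Ig 1 Rlt_0_1)))
    as [u0 [v0 [huv0 [hu0 _]]]].
  destruct (If u0 v0 hu0 huv0) as [pr0].
  destruct (completeness E bE) as [l [Hl1 Hl2]]; [exists (RiemannInt pr0); exists u0, v0, pr0; auto|].
  exists l. split; auto. intros eps heps.
  assert (Happrox : exists x, E x /\ l - eps < x).
  { apply NNPP. intro N. assert (l <= l - eps); [|lra].
    apply Hl2. intros x Ex. apply Rnot_lt_le. intro h. apply N. exists x; auto. }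
  destruct Happrox as [x [[u1 [v1 [pr1 [hu1 [huv1 ->]]]]] Hx]].
  generalize (ws_ev_dom W _ (ws_ev_cofinal W u1 v1 hu1)). apply ws_ev_mono.
  intros u v [hu [h1 h2]] huv pr.
  assert (RiemannInt pr1 <= RiemannInt pr).
  { apply RI_window_mono; auto. intros z hz. apply Hfg, (ws_dom_up W u); auto; lra. }
  assert (RiemannInt pr <= l) by (apply Hl1; exists u, v, pr; auto).
  apply Rabs_def1; lra.
Qed.

Lemma improper_of_dominated f g L :
  (forall u v, ws_dom W u -> u <= v -> inhabited (Riemann_integrable f u v)) ->
  (forall z, ws_dom W z -> Rabs (f z) <= g z) -> improper g L -> exists l, improper f l.
Proof.
  intros If Hfg Ig.
  destruct (improper_of_nonneg_dominated (fun z => f z + 1 * g z)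
              (fun z => g z + 1 * g z) (L + 1 * L)) as [l1 Hl1].
  - intros u v hu huv. destruct (If u v hu huv) as [pf], (proj1 Ig u v hu huv) as [pg].
    constructor. apply RiemannInt_P10; auto.
  - intros z hz. specialize (Hfg z hz). pose proof (Rle_abs (f z)).
    pose proof (Rle_abs (- f z)). rewrite Rabs_Ropp in *. lra.
  - apply improper_lin; auto.
  - exists (l1 + (-1) * L).
    apply improper_ext with (f := fun z => (f z + 1 * g z) + (-1) * g z); [intros; ring|].
    apply improper_lin; auto.
Qed.

Lemma improper_nonpos_of_window_bounds F G lF : improper F lF -> improper G 0 ->
  ws_ev W (fun u v => u <= v -> forall (pF : Riemann_integrable F u v)
      (pG : Riemann_integrable G u v),
      exists c, 0 <= c <= 1 /\ RiemannInt pF <= c * RiemannInt pG) ->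
  lF <= 0.
Proof.
  intros [IF LF] [IG LG] K. apply Rnot_lt_le. intro N.
  assert (he : 0 < lF / 2) by lra.
  destruct (ws_ev_witness W _ (ws_ev_dom W _ (ws_ev_and W _ _ K
     (ws_ev_and W _ _ (LF _ he) (LG _ he))))) as [u [v [huv [hu [Hk [HF HG]]]]]].
  destruct (IF u v hu huv) as [pF], (IG u v hu huv) as [pG].
  destruct (Hk huv pF pG) as [c [Hc HK]].
  specialize (HF huv pF). specialize (HG huv pG).
  apply Rabs_def2 in HF. apply Rabs_def2 in HG. nra.
Qed.
End Improper.

Section Heavy.
Variable W : window_system.
Variables p h : R -> R.
Hypothesis regular : forall z, ws_dom W z ->
  continuity_pt p z /\ continuity_pt h z /\ 0 <= p z.
Hypothesis mass : improper W p 1.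

Lemma RI_inhabited_of_cont f : (forall z, ws_dom W z -> continuity_pt f z) ->
  forall u v, ws_dom W u -> u <= v -> inhabited (Riemann_integrable f u v).
Proof.
  intros Cf u v hu huv. constructor. apply continuity_implies_RiemannInt; auto.
  intros z hz. apply Cf, (ws_dom_up W u); auto; lra.
Qed.

(* For a continuous contraction g (|g x| <= |x|, e.g. g = id or T_a),
   g(X) with X = h(Z) - m is integrable: it is dominated by |h(Z)| + |m|. *)
Lemma expect_contraction m g L : improper W (fun z => Rabs (h z) * p z) L ->
  (forall x, continuity_pt g x) -> (forall x, Rabs (g x) <= Rabs x) ->
  (exists L', improper W (fun z => Rabs (g (h z - m)) * p z) L') /\
  (exists l, improper W (fun z => g (h z - m) * p z) l).
Proof.
  intros IL Cg Hg.
  set (D := fun z => Rabs (h z) * p z + Rabs m * p z).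
  assert (ID : improper W D (L + Rabs m * 1)) by (apply improper_lin; auto).
  assert (Cgx : forall z, ws_dom W z -> continuity_pt (fun z => g (h z - m)) z).
  { intros z hz. apply (continuity_pt_comp (fun z => h z - m) g); auto.
    apply continuity_pt_minus; [apply regular; auto | apply cont_const]. }
  assert (Dom : forall z, ws_dom W z -> Rabs (g (h z - m)) * p z <= D z).
  { intros z hz. destruct (regular z hz) as [_ [_ Pz]]. unfold D.
    assert (Rabs (g (h z - m)) <= Rabs (h z) + Rabs m).
    { eapply Rle_trans; [apply Hg|]. unfold Rminus. eapply Rle_trans; [apply Rabs_triang|].
      rewrite Rabs_Ropp. lra. }
    nra. }
  assert (Pabs : forall z, ws_dom W z -> Rabs (g (h z - m) * p z) = Rabs (g (h z - m)) * p z).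
  { intros z hz. rewrite Rabs_mult, (Rabs_right (p z)); auto. apply Rle_ge, regular; auto. }
  split; (eapply (improper_of_dominated W _ D); [apply RI_inhabited_of_cont| |exact ID]).
  - intros z hz. apply continuity_pt_mult; [|apply regular; auto].
    apply (continuity_pt_comp _ Rabs); [apply Cgx; auto | apply Rcontinuity_abs].
  - intros z hz. rewrite Rabs_mult, Rabs_Rabsolu, <- Rabs_mult, Pabs; auto.
  - intros z hz. apply continuity_pt_mult; [apply Cgx; auto | apply regular; auto].
  - intros z hz. rewrite Pabs; auto.
Qed.

Theorem heavy_on_left_of_window_bounds m : expect W p h (fun y => y) m ->
  (forall a, 0 < a -> ws_ev W (fun u v => u <= v -> window_bound p h m a u v)) ->
  heavy_on_left (expect W p (fun z => h z - m)).
Proof.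
  intros [[L IL] Ih] K.
  assert (Hmean : improper W (fun z => (h z - m) * p z) 0).
  { replace 0 with (m + (- m) * 1) by ring.
    apply improper_ext with (f := fun z => h z * p z + (- m) * p z); [intros; ring|].
    apply improper_lin; auto. }
  split.
  - split; auto. apply (expect_contraction m (fun x => x) L IL).
    + intros x. apply derivable_continuous_pt, derivable_pt_id.
    + intros; lra.
  - intros a ha.
    destruct (expect_contraction m (T a) L IL (fun x => T_cont a x ha) (fun x => T_abs_le a x ha))
      as [Iabs [l Il]].
    exists l. split; [split; auto|].
    apply (improper_nonpos_of_window_bounds W _ _ l Il Hmean), K; auto.
Qed.
End Heavy.

Definition ev_pos (P : R -> R -> Prop) : Prop :=
  exists d, 0 < d /\ exists B, forall u v, 0 < u -> u < d -> B < v -> P u v.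

Definition windows_pos : window_system.
Proof.
  refine {| ws_dom := fun u => 0 < u; ws_ev := ev_pos |}.
  - intros; lra.
  - intros P Q H [d [hd [B HB]]]. exists d. split; auto. exists B. auto.
  - intros P Q [d1 [hd1 [B1 H1]]] [d2 [hd2 [B2 H2]]].
    exists (Rmin d1 d2). split; [apply Rmin_pos; auto|]. exists (Rmax B1 B2).
    pose proof (Rmin_l d1 d2). pose proof (Rmin_r d1 d2).
    pose proof (Rmax_l B1 B2). pose proof (Rmax_r B1 B2).
    intros u v hu hd hB. split; [apply H1 | apply H2]; lra.
  - intros P [d [hd [B HB]]]. exists d. split; auto. exists B. auto.
  - intros u0 v0 hu0. exists u0. split; auto. exists v0. intros; lra.
  - intros P [d [hd [B HB]]]. exists (d / 2), (Rmax B (d / 2) + 1).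
    pose proof (Rmax_l B (d / 2)). pose proof (Rmax_r B (d / 2)).
    split; [lra | apply HB; lra].
Defined.

Definition ev_R (P : R -> R -> Prop) : Prop :=
  exists A, forall u v, u < - A -> A < v -> P u v.

Definition windows_R : window_system.
Proof.
  refine {| ws_dom := fun _ => True; ws_ev := ev_R |}.
  - auto.
  - intros P Q H [A HA]. exists A. auto.
  - intros P Q [A1 H1] [A2 H2]. exists (Rmax A1 A2).
    pose proof (Rmax_l A1 A2). pose proof (Rmax_r A1 A2).
    intros u v hu hv. split; [apply H1 | apply H2]; lra.
  - intros P [A HA]. exists A. auto.
  - intros u0 v0 _. exists (Rmax (Rabs u0) (Rabs v0)). intros u v hu hv.
    pose proof (Rmax_l (Rabs u0) (Rabs v0)). pose proof (Rmax_r (Rabs u0) (Rabs v0)).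
    pose proof (Rle_abs v0). pose proof (Rle_abs (- u0)). rewrite Rabs_Ropp in *. lra.
  - intros P [A HA]. exists (- Rabs A - 1), (Rabs A + 1).
    pose proof (Rle_abs A). pose proof (Rle_abs (- A)). rewrite Rabs_Ropp in *.
    split; [lra | apply HA; lra].
Defined.

(* For the key inequality only the right end of the window matters. *)
Lemma ev_pos_of_right_end (P : R -> R -> Prop) R0 :
  (forall u v, 0 < u -> R0 <= v -> P u v) -> ws_ev windows_pos P.
Proof. intros H. exists 1. split; [lra|]. exists R0. intros; apply H; lra. Qed.

Lemma ev_R_of_right_end (P : R -> R -> Prop) R0 :
  (forall u v, R0 <= v -> P u v) -> ws_ev windows_R P.
Proof.
  intros H. exists (Rabs R0). intros u v _ hv. apply H.
  pose proof (Rle_abs R0). lra.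
Qed.

Lemma int_pos_improper f l : int_pos f l <-> improper windows_pos f l.
Proof.
  split; intros [I L]; split; auto; intros eps he;
    destruct (L eps he) as [d [hd [B HB]]]; exists d; split; auto; exists B; auto.
Qed.

Lemma int_R_improper f l : int_R f l <-> improper windows_R f l.
Proof.
  split; intros [Hi L]; split.
  - intros u v _; apply Hi.
  - intros eps he. destruct (L eps he) as [A HA]. exists A; auto.
  - intros u v; apply Hi; exact I.
  - intros eps he. destruct (L eps he) as [A HA]. exists A; auto.
Qed.

Lemma heavy_on_left_ext (E1 E2 : (R -> R) -> R -> Prop) :
  (forall g l, E1 g l -> E2 g l) -> heavy_on_left E1 -> heavy_on_left E2.
Proof.
  intros H [H0 Ha]. split; auto.
  intros a ha. destruct (Ha a ha) as [l [El Hl]]. exists l; auto.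
Qed.

Lemma expect_pos_improper p h g l : expect_pos p h g l <-> expect windows_pos p h g l.
Proof.
  unfold expect_pos, expect. rewrite !int_pos_improper.
  split; intros [[L IL] I]; split; auto; exists L; apply int_pos_improper; auto.
Qed.

Lemma expect_R_improper p h g l : expect_R p h g l <-> expect windows_R p h g l.
Proof.
  unfold expect_R, expect. rewrite !int_R_improper.
  split; intros [[L IL] Hl]; split; auto; exists L; apply int_R_improper; auto.
Qed.

(** * (i) The Gamma distribution *)

Section Gamma.
Variables C a lam m : R.
Hypotheses (hC : 0 < C) (hlam : 0 < lam).

Let p := gamma_density C a lam.

Lemma gamma_density_exp y : p y = C * exp ((a - 1) * ln y + - lam * y).
Proof. unfold p, gamma_density, Rpower. rewrite exp_plus. ring. Qed.

Lemma gamma_density_pos y : 0 < p y.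
Proof. rewrite gamma_density_exp. apply Rmult_lt_0_compat; auto. apply exp_pos. Qed.

Lemma gamma_density_cont y : 0 < y -> continuity_pt p y.
Proof.
  intros hy.
  replace p with (fun y => C * exp ((a - 1) * ln y + - lam * y))
    by (apply functional_extensionality; intros; rewrite gamma_density_exp; auto).
  eapply cont_of_deriv. deriv_auto; try reflexivity; auto.
Qed.

(* Log-ratio of the densities of -X and X at t, X = Y - m. *)
Definition gamma_log_ratio t := (a - 1) * (ln (m - t) - ln (m + t)) + 2 * lam * t.

Lemma gamma_density_ratio t : 0 <= t < m ->
  p (m - t) = p (m + t) * exp (gamma_log_ratio t).
Proof.
  intros ht. rewrite !gamma_density_exp, Rmult_assoc, <- exp_plus.
  unfold gamma_log_ratio. f_equal. f_equal. ring.
Qed.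

(* The log-ratio vanishes at 0 and is concave (its derivative decreases
   since 1/(m-t) + 1/(m+t) = 2m/(m^2-t^2) increases), hence single-crossing. *)
Lemma gamma_log_ratio_crossing s : s < m -> single_crossing gamma_log_ratio s.
Proof.
  intros hs t1 t2 h1 h12 h2 g2.
  assert (g0 : gamma_log_ratio 0 = 0)
    by (unfold gamma_log_ratio; rewrite Rminus_0_r, Rplus_0_r; ring).
  destruct (Rle_dec a 1) as [ha|ha].
  - unfold gamma_log_ratio. assert (ln (m - t1) <= ln (m + t1)) by (apply le_ln; lra). nra.
  - apply Rnot_lt_ge. intro g1.
    set (dg := fun t => (a - 1) * (- / (m - t) - / (m + t)) + 2 * lam).
    assert (D : forall t, 0 <= t <= s -> derivable_pt_lim gamma_log_ratio t (dg t)).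
    { intros t ht. unfold gamma_log_ratio, dg.
      deriv_auto; try reflexivity; try lra; simpl; field; lra. }
    assert (t1 <> 0) by (intro; subst; lra).
    destruct (MVT_cor2 gamma_log_ratio dg 0 t1) as [x1 [E1 H1]]; [lra|intros; apply D; lra|].
    destruct (MVT_cor2 gamma_log_ratio dg t1 t2) as [x2 [E2 H2]];
      [destruct (Req_dec t1 t2); [subst; lra|lra] | intros; apply D; lra|].
    assert (dg x1 < 0) by (rewrite g0 in E1; nra).
    assert (dg x2 > 0) by nra.
    assert (/ (m - x1) + / (m + x1) <= / (m - x2) + / (m + x2)).
    { replace (/ (m - x1) + / (m + x1)) with (2 * m * / ((m - x1) * (m + x1))) by (field; lra).
      replace (/ (m - x2) + / (m + x2)) with (2 * m * / ((m - x2) * (m + x2))) by (field; lra).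
      apply Rmult_le_compat_l; [lra|]. apply Rinv_le_contravar; nra. }
    unfold dg in *. nra.
Qed.

(* Key inequality: for windows reaching 2m, pair m - t with m + t. *)
Lemma gamma_window_bound b u v : 0 < b -> 0 < u -> 2 * m <= v -> u <= v ->
  window_bound p (fun y => y) m b u v.
Proof.
  intros hb hu hv huv. destruct (Rle_dec m u) as [hmu|hmu].
  { apply window_bound_nonneg; auto. intros z hz. split; [lra|]. left; apply gamma_density_pos. }
  apply (window_bound_paired _ _ m b u v (m - u) (fun t => m - t) (fun t => m + t)
           (fun _ => -1) (fun _ => 1)); auto; try lra.
  - intros t ht. lra.
  - intros t ht. split; deriv_auto; ring.
  - intros z hz. split; [apply gamma_density_cont; lra|].
    split; [apply derivable_continuous_pt, derivable_pt_id | left; apply gamma_density_pos].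
  - intros z hz. lra.
  - apply (single_crossing_of_log_ratio _ (fun t => p (m + t)) gamma_log_ratio).
    + intros t ht. split; [apply gamma_density_pos|].
      rewrite gamma_density_ratio by lra. ring.
    + apply gamma_log_ratio_crossing; lra.
Qed.
End Gamma.

Theorem gamma_heavy_on_left a lam C m : 0 < lam -> 0 < C ->
  int_pos (gamma_density C a lam) 1 ->
  expect_pos (gamma_density C a lam) (fun y => y) (fun y => y) m ->
  heavy_on_left (expect_pos (gamma_density C a lam) (fun y => y - m)).
Proof.
  intros hlam hC I1 Em.
  apply (heavy_on_left_ext _ _ (fun g l => proj2 (expect_pos_improper _ _ g l))).
  apply (heavy_on_left_of_window_bounds windows_pos _ (fun y => y)).
  - intros z hz. split; [apply gamma_density_cont; auto|].
    split; [apply derivable_continuous_pt, derivable_pt_id | left; apply gamma_density_pos; auto].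
  - apply int_pos_improper; auto.
  - apply expect_pos_improper; auto.
  - intros b hb. apply (ev_pos_of_right_end _ (2 * m)). intros u v hu hv huv.
    apply gamma_window_bound; auto.
Qed.

(* Key inequality for X = A exp(Z) - m with Z of a continuous positive
   density p on R: for windows reaching ln(2m/A), pair the points where
   X = -t and X = t, namely ln((m-t)/A) and ln((m+t)/A). *)
Lemma exp_model_window_bound p h A m b u v : 0 < A -> 0 < b -> u <= v ->
  (forall z, h z = A * exp z) -> (forall z, continuity_pt p z /\ 0 < p z) ->
  ln (2 * m / A) <= v ->
  single_crossing (fun t => p (ln ((m - t) / A)) * / (m - t)
                          - p (ln ((m + t) / A)) * / (m + t)) (m - A * exp u) ->
  window_bound p h m b u v.
Proof.
  intros hA hb huv Hh Hp hv Hcross.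
  assert (Cont : forall z, continuity_pt h z).
  { intros z. replace h with (fun z => A * exp z) by (apply functional_extensionality; auto).
    eapply cont_of_deriv. deriv_auto; reflexivity. }
  destruct (Rle_dec m (A * exp u)) as [hmu|hmu].
  { apply window_bound_nonneg; auto. intros z hz. rewrite Hh. split.
    - assert (exp u <= exp z) by (apply le_exp; lra). nra.
    - left; apply Hp. }
  assert (hAu : 0 < A * exp u) by (apply Rmult_lt_0_compat; auto; apply exp_pos).
  set (s := m - A * exp u).
  assert (Hq : forall t, 0 <= t <= s -> 0 < (m - t) / A /\ 0 < (m + t) / A)
    by (intros; unfold s in *; split; apply Rdiv_lt_0_compat; lra).
  assert (Hu : u = ln ((m - s) / A))
    by (unfold s; replace ((m - (m - A * exp u)) / A) with (exp u) by (field; lra);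
        rewrite ln_exp; auto).
  assert (Hmono : forall x y, 0 < x -> x <= y -> ln (x / A) <= ln (y / A))
    by (intros; apply le_ln; [apply Rdiv_lt_0_compat|apply Rmult_le_compat_r]; auto;
        left; apply Rinv_0_lt_compat; auto).
  apply (window_bound_paired _ _ m b u v s (fun t => ln ((m - t) / A)) (fun t => ln ((m + t) / A))
           (fun t => - / (m - t)) (fun t => / (m + t))); auto.
  - unfold s; lra.
  - rewrite Rminus_0_r, Rplus_0_r; auto.
  - eapply Rle_trans; [|exact hv]. apply Hmono; unfold s in *; lra.
  - intros t ht. rewrite Hu. unfold s in *. repeat split; apply Hmono; lra.
  - intros t ht. destruct (Hq t ht). unfold s in *.
    split; deriv_auto; try reflexivity; try (simpl; lra); simpl; field; lra.
  - intros t ht. destruct (Hq t ht). rewrite !Hh, !exp_ln by auto. split; field; lra.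
  - intros z hz. repeat split; try apply Hp; auto. left; apply Hp.
  - intros z hz. rewrite Hh. unfold s in *.
    assert (exp (ln ((m + (m - A * exp u)) / A)) <= exp z) by (apply le_exp; lra).
    rewrite exp_ln in * by (apply Rdiv_lt_0_compat; lra).
    apply (Rmult_le_compat_l A) in H; [|lra].
    replace (A * ((m + (m - A * exp u)) / A)) with (m + (m - A * exp u)) in H by (field; lra).
    lra.
  - eapply single_crossing_ext; [|exact Hcross]. intros t _. simpl. ring.
Qed.


(** * (ii) The Pareto distribution *)

Lemma exp_density_deriv lam z :
  derivable_pt_lim (exp_density lam) z (lam * (exp (- lam * z) * (- lam))).
Proof. unfold exp_density. deriv_auto; try reflexivity. simpl; ring. Qed.

Lemma exp_density_mass lam : 0 < lam -> int_pos (exp_density lam) 1.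
Proof.
  intros hl.
  assert (FT : forall u v (pr : Riemann_integrable (exp_density lam) u v), u <= v ->
           RiemannInt pr = exp (- lam * u) - exp (- lam * v)).
  { intros u v pr huv. rewrite (RI_FTC _ (fun z => - exp (- lam * z)) u v pr huv); [ring| |].
    - intros; eapply cont_of_deriv; apply exp_density_deriv.
    - intros x hx. unfold exp_density. deriv_auto; try reflexivity. simpl; ring. }
  split.
  - intros u v hu huv. constructor. apply continuity_implies_RiemannInt; auto.
    intros; eapply cont_of_deriv; apply exp_density_deriv.
  - intros eps he. exists (eps / (2 * lam)). split; [apply Rdiv_lt_0_compat; lra|].
    exists (2 / (lam * eps)). intros u v pr hu hud hBv huv. rewrite FT by auto.
    assert (1 - lam * u <= exp (- lam * u)) by (pose proof (exp_ineq1_le (- lam * u)); lra).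
    assert (exp (- lam * u) <= 1) by (rewrite <- exp_0; apply le_exp; nra).
    assert (lam * u < eps / 2).
    { apply (Rmult_lt_compat_l lam) in hud; auto.
      replace (lam * (eps / (2 * lam))) with (eps / 2) in hud by (field; lra). lra. }
    assert (0 < exp (- lam * v)) by apply exp_pos.
    assert (exp (- lam * v) < eps / 2).
    { replace (- lam * v) with (- (lam * v)) by ring. rewrite exp_Ropp.
      assert (1 + lam * v <= exp (lam * v)) by apply exp_ineq1_le.
      assert (2 / eps < lam * v).
      { apply (Rmult_lt_compat_l lam) in hBv; auto.
        replace (lam * (2 / (lam * eps))) with (2 / eps) in hBv by (field; lra). lra. }
      assert (0 < 2 / eps) by (apply Rdiv_lt_0_compat; lra).
      apply Rlt_le_trans with (/ (2 / eps)); [apply Rinv_lt_contravar; nra|].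
      right; field; lra. }
    apply Rabs_def1; lra.
Qed.

Theorem pareto_heavy_on_left A lam m : 0 < A -> 0 < lam ->
  expect_pos (exp_density lam) (fun z => A * exp z) (fun y => y) m ->
  heavy_on_left (expect_pos (exp_density lam) (fun z => A * exp z - m)).
Proof.
  intros hA hl Em.
  assert (Hp : forall z, continuity_pt (exp_density lam) z /\ 0 < exp_density lam z).
  { intros z. split; [eapply cont_of_deriv; apply exp_density_deriv|].
    apply Rmult_lt_0_compat; auto. apply exp_pos. }
  apply (heavy_on_left_ext _ _ (fun g l => proj2 (expect_pos_improper _ _ g l))).
  apply (heavy_on_left_of_window_bounds windows_pos _ (fun z => A * exp z)).
  - intros z hz. split; [apply Hp|]. split; [|left; apply Hp].
    eapply cont_of_deriv. deriv_auto; reflexivity.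
  - apply int_pos_improper, exp_density_mass; auto.
  - apply expect_pos_improper; auto.
  - intros b hb. apply (ev_pos_of_right_end _ (ln (2 * m / A))). intros u v hu hv huv.
    apply (exp_model_window_bound _ _ A); auto.
    (* the density decreases, so the weight is nonnegative: no sign change *)
    apply single_crossing_of_nonneg. intros t ht.
    assert (0 < A * exp u) by (apply Rmult_lt_0_compat; auto; apply exp_pos).
    assert (Hln : ln ((m - t) / A) <= ln ((m + t) / A)).
    { apply le_ln; [apply Rdiv_lt_0_compat|apply Rmult_le_compat_r]; try lra.
      left; apply Rinv_0_lt_compat; auto. }
    assert (exp_density lam (ln ((m + t) / A)) <= exp_density lam (ln ((m - t) / A)))
      by (unfold exp_density; apply Rmult_le_compat_l; [lra|apply le_exp; nra]).
    assert (/ (m + t) <= / (m - t)) by (apply Rinv_le_contravar; lra).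
    assert (0 < / (m + t)) by (apply Rinv_0_lt_compat; lra).
    pose proof (proj2 (Hp (ln ((m + t) / A)))). nra.
Qed.

Lemma between_dist a b c : Rmin a b <= c <= Rmax a b -> Rabs (c - a) <= Rabs (b - a).
Proof.
  unfold Rmin, Rmax. intros Hc. destruct (Rle_dec a b);
  (destruct (Rcase_abs (b - a)); [rewrite (Rabs_left (b - a)) by lra | rewrite (Rabs_right (b - a)) by lra]);
  (destruct (Rcase_abs (c - a)); [rewrite (Rabs_left (c - a)) by lra | rewrite (Rabs_right (c - a)) by lra]);
  lra.
Qed.

(* Second-order Taylor bound, by the mean value theorem applied twice. *)
Lemma taylor_remainder_bound G G1 G2 t0 h M :
  (forall s, Rabs (s - t0) <= Rabs h ->
     derivable_pt_lim G s (G1 s) /\ derivable_pt_lim G1 s (G2 s) /\ Rabs (G2 s) <= M) ->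
  Rabs (G (t0 + h) - G t0 - h * G1 t0) <= M * (h * h).
Proof.
  intros H.
  assert (rng : forall c, Rmin t0 (t0 + h) <= c <= Rmax t0 (t0 + h) -> Rabs (c - t0) <= Rabs h).
  { intros c hc. pose proof (between_dist _ _ _ hc) as E.
    replace (t0 + h - t0) with h in E by ring. exact E. }
  destruct (MVT_abs (fun s => G s - G t0 - (s - t0) * G1 t0) (fun s => G1 s - G1 t0) t0 (t0 + h))
    as [c [Hc Hcr]].
  { intros c hc. destruct (H c (rng c hc)) as [D1 _].
    eapply dl_minus; [eapply dl_minus; [exact D1 | apply dl_const; reflexivity | reflexivity]
      | eapply dl_mult; deriv_auto; reflexivity | ring]. }
  replace (G t0 - G t0 - (t0 - t0) * G1 t0) with 0 in Hc by ring.
  replace (t0 + h - t0) with h in Hc by ring. rewrite Rminus_0_r in Hc. rewrite Hc.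
  assert (rc := rng c Hcr).
  assert (rngc : forall d, Rmin t0 c <= d <= Rmax t0 c -> Rabs (d - t0) <= Rabs h)
    by (intros d hd; eapply Rle_trans; [apply between_dist, hd | exact rc]).
  destruct (MVT_abs G1 G2 t0 c) as [d [Hd Hdr]]; [intros d hd; apply H, rngc, hd|].
  rewrite Hd. destruct (H d (rngc d Hdr)) as [_ [_ HM]].
  pose proof (Rabs_pos (G2 d)). pose proof (Rabs_pos (c - t0)). pose proof (Rabs_pos h).
  assert (Rabs h * Rabs h = h * h) by (rewrite <- Rabs_mult; apply Rabs_right; nra).
  assert (Rabs (G2 d) * Rabs (c - t0) <= M * Rabs h) by (apply Rmult_le_compat; lra).
  nra.
Qed.

Lemma deriv_param_integral (g : R -> R -> R) (D : R -> R) a b t0 K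
  (pg : forall t, Riemann_integrable (g t) a b) (pD : Riemann_integrable D a b) :
  a <= b -> 0 <= K ->
  (forall h x, Rabs h <= 1 -> a <= x <= b ->
     Rabs (g (t0 + h) x - g t0 x - h * D x) <= K * (h * h)) ->
  derivable_pt_lim (fun t => RiemannInt (pg t)) t0 (RiemannInt pD).
Proof.
  intros hab hK H eps heps.
  set (del := Rmin 1 (eps / (K * (b - a) + 1))).
  assert (hKba : 0 <= K * (b - a)) by nra.
  assert (hdel : 0 < del) by (apply Rmin_pos; [lra|apply Rdiv_lt_0_compat; lra]).
  exists (mkposreal del hdel). simpl. intros h hh0 hh.
  assert (h1 : Rabs h <= 1) by (pose proof (Rmin_l 1 (eps / (K * (b - a) + 1))); unfold del in *; lra).
  assert (h2 : Rabs h < eps / (K * (b - a) + 1))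
    by (pose proof (Rmin_r 1 (eps / (K * (b - a) + 1))); unfold del in *; lra).
  set (k := fun x => g (t0 + h) x + (-1) * g t0 x).
  assert (pk : Riemann_integrable k a b) by (apply RiemannInt_P10; auto).
  set (k2 := fun x => k x + (- h) * D x).
  assert (pk2 : Riemann_integrable k2 a b) by (apply RiemannInt_P10; auto).
  assert (E1 : RiemannInt pk = RiemannInt (pg (t0 + h)) + (-1) * RiemannInt (pg t0))
    by apply RiemannInt_P13.
  assert (E2 : RiemannInt pk2 = RiemannInt pk + (- h) * RiemannInt pD) by apply RiemannInt_P13.
  replace ((RiemannInt (pg (t0 + h)) - RiemannInt (pg t0)) / h - RiemannInt pD)
    with (RiemannInt pk2 / h) by (rewrite E2, E1; field; auto).
  assert (pa := RiemannInt_P16 pk2).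
  assert (A1 := RiemannInt_P17 pk2 pa hab).
  assert (A2 : RiemannInt pa <= K * (h * h) * (b - a)).
  { apply RI_le_const; auto. intros x hx. unfold k2, k.
    replace (g (t0 + h) x + -1 * g t0 x + - h * D x) with (g (t0 + h) x - g t0 x - h * D x)
      by ring.
    apply H; auto; lra. }
  assert (hp : 0 < Rabs h) by (apply Rabs_pos_lt; auto).
  assert (Eh : Rabs h * Rabs h = h * h) by (rewrite <- Rabs_mult; apply Rabs_right; nra).
  unfold Rdiv. rewrite Rabs_mult, Rabs_inv.
  apply Rle_lt_trans with (K * (b - a) * Rabs h).
  { apply Rmult_le_reg_r with (Rabs h); auto. rewrite Rmult_assoc, Rinv_l by lra. nra. }
  apply Rle_lt_trans with ((K * (b - a) + 1) * Rabs h); [nra|].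
  apply (Rmult_lt_compat_l (K * (b - a) + 1)) in h2; [|lra].
  replace ((K * (b - a) + 1) * (eps / (K * (b - a) + 1))) with eps in h2 by (field; lra).
  lra.
Qed.

(** * The Gaussian integral *)

Definition RI_cont (f : R -> R) (cf : forall x, continuity_pt f x) (a b : R) :
  Riemann_integrable f a b :=
  match Rle_dec a b with
  | left h => continuity_implies_RiemannInt h (fun x _ => cf x)
  | right h => RiemannInt_P1 (continuity_implies_RiemannInt
                 (Rlt_le _ _ (Rnot_le_lt _ _ h)) (fun x _ => cf x))
  end.

Lemma continuous_primitive f : (forall x, continuity_pt f x) ->
  exists F, forall x, derivable_pt_lim F x (f x).
Proof.
  intros cf. exists (fun y => RiemannInt (RI_cont f cf 0 y)). intros x0.
  set (a := x0 - 1). set (b := x0 + 1).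
  assert (h : a <= b) by (unfold a, b; lra).
  set (P := FTC_P1 h (fun x _ => cf x)).
  apply derivable_pt_lim_locally_ext with (a := a) (b := b)
    (f := fun y => RiemannInt (RI_cont f cf 0 a) + primitive h P y).
  - unfold a, b; lra.
  - intros z hz. unfold primitive.
    destruct (Rle_dec a z) as [r1|r1]; [|lra]. destruct (Rle_dec z b) as [r2|r2]; [|lra].
    apply RiemannInt_P26.
  - apply (dl_plus _ _ _ 0 (f x0)); [apply dl_const; reflexivity | | ring].
    apply (RiemannInt_P28 (f := f)). unfold a, b; lra.
Qed.

Definition gauss x := exp (- (x * x)).

Lemma gauss_cont x : continuity_pt gauss x.
Proof. unfold gauss. eapply cont_of_deriv. deriv_auto; reflexivity. Qed.

(* Integrand of the auxiliary function
     J t = int_0^1 exp(-t^2 (1+x^2)) / (1+x^2) dx,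
   and its t-derivative. *)
Definition gq t x := exp (- (t * t) * (1 + x * x)) * / (1 + x * x).
Definition dgq t x := -2 * t * exp (- (t * t) * (1 + x * x)).

Lemma gq_cont t x : continuity_pt (gq t) x.
Proof.
  unfold gq. apply (continuity_pt_mult _ (fun x => / (1 + x * x))).
  - eapply cont_of_deriv. deriv_auto; reflexivity.
  - apply (continuity_pt_inv (fun x => 1 + x * x)); [|nra].
    eapply cont_of_deriv. deriv_auto; reflexivity.
Qed.

Lemma dgq_cont t x : continuity_pt (dgq t) x.
Proof. unfold dgq. eapply cont_of_deriv. deriv_auto; reflexivity. Qed.

Lemma gq_taylor t0 h x : Rabs h <= 1 -> 0 <= x <= 1 ->
  Rabs (gq (t0 + h) x - gq t0 x - h * dgq t0 x)
  <= (2 + 8 * ((Rabs t0 + 1) * (Rabs t0 + 1))) * (h * h).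
Proof.
  intros hh hx. set (c := 1 + x * x). assert (hc : 1 <= c <= 2) by (unfold c; nra).
  apply (taylor_remainder_bound (fun t => gq t x) (fun t => dgq t x)
    (fun t => (-2 + 4 * (t * t) * c) * exp (- (t * t) * c))).
  intros s hs. split; [|split].
  - unfold gq, dgq. fold c. deriv_auto; try reflexivity. simpl. field. lra.
  - unfold dgq. fold c. deriv_auto; try reflexivity. simpl. ring.
  - rewrite Rabs_mult, (Rabs_right (exp _)) by (left; apply exp_pos).
    assert (exp (- (s * s) * c) <= 1) by (rewrite <- exp_0; apply le_exp; nra).
    assert (Rabs s <= Rabs t0 + 1).
    { replace s with (t0 + (s - t0)) by ring. eapply Rle_trans; [apply Rabs_triang|lra]. }
    assert (s * s <= (Rabs t0 + 1) * (Rabs t0 + 1)).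
    { rewrite <- (Rabs_right (s * s)), Rabs_mult by nra.
      pose proof (Rabs_pos s). apply Rmult_le_compat; lra. }
    assert (Rabs (-2 + 4 * (s * s) * c) <= 2 + 8 * ((Rabs t0 + 1) * (Rabs t0 + 1))).
    { apply Rabs_le. split; nra. }
    pose proof (exp_pos (- (s * s) * c)). pose proof (Rabs_pos (-2 + 4 * (s * s) * c)). nra.
Qed.

Definition J t := RiemannInt (RI_cont (gq t) (gq_cont t) 0 1).

Lemma J_deriv t0 : derivable_pt_lim J t0 (RiemannInt (RI_cont (dgq t0) (dgq_cont t0) 0 1)).
Proof.
  apply (deriv_param_integral gq (dgq t0) 0 1 t0 (2 + 8 * ((Rabs t0 + 1) * (Rabs t0 + 1)))
     (fun t => RI_cont (gq t) (gq_cont t) 0 1)); [lra | pose proof (Rabs_pos t0); nra |].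
  intros h x hh hx. apply gq_taylor; auto.
Qed.

Lemma J0 : J 0 = PI / 4.
Proof.
  unfold J. rewrite (RI_FTC _ atan 0 1); [| lra | intros; apply gq_cont |].
  - rewrite atan_1, atan_0. ring.
  - intros x hx. replace (gq 0 x) with (/ (1 + x ^ 2)) by (unfold gq; rewrite Rmult_0_r,
      Ropp_0, Rmult_0_l, exp_0; field; nra).
    apply derivable_pt_lim_atan.
Qed.

Lemma J_bounds t : 0 <= J t <= exp (- (t * t)).
Proof.
  unfold J. replace (exp (- (t * t))) with (exp (- (t * t)) * (1 - 0)) by ring.
  replace 0 with (0 * (1 - 0)) at 1 by ring.
  split; [apply RI_ge_const | apply RI_le_const]; try lra; intros x hx; unfold gq.
  - apply Rmult_le_pos; [left; apply exp_pos | left; apply Rinv_0_lt_compat; nra].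
  - assert (exp (- (t * t) * (1 + x * x)) <= exp (- (t * t))) by (apply le_exp; nra).
    assert (/ (1 + x * x) <= 1) by (rewrite <- Rinv_1; apply Rinv_le_contravar; nra).
    assert (0 < / (1 + x * x)) by (apply Rinv_0_lt_compat; nra).
    pose proof (exp_pos (- (t * t) * (1 + x * x))). nra.
Qed.

Lemma exp_neg_sq_small b eta : 0 < eta -> / eta + 1 <= Rabs b -> exp (- (b * b)) < eta.
Proof.
  intros he hb. pose proof (Rinv_0_lt_compat eta he).
  assert (/ eta < b * b)
    by (rewrite <- (Rabs_right (b * b)), Rabs_mult by (apply Rle_ge, Rle_0_sqr); nra).
  rewrite exp_Ropp, <- (Rinv_inv eta). pose proof (exp_ineq1_le (b * b)).
  apply Rinv_lt_contravar; [pose proof (exp_pos (b * b)); nra | lra].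
Qed.

Section GaussIntegral.
Variable E : R -> R.
Hypothesis E_prim : forall x, derivable_pt_lim E x (gauss x).

Lemma dgq_integral t :
  RiemannInt (RI_cont (dgq t) (dgq_cont t) 0 1) = -2 * exp (- (t * t)) * (E t - E 0).
Proof.
  rewrite (RI_FTC _ (fun x => -2 * exp (- (t * t)) * E (t * x)) 0 1);
    [| lra | intros; apply dgq_cont |].
  - rewrite Rmult_1_r, Rmult_0_r. ring.
  - intros x hx. eapply dl_mult; [apply dl_const; reflexivity | | ].
    + eapply dl_comp with (f := fun y => t * y); [deriv_auto; reflexivity | apply E_prim | reflexivity].
    + unfold dgq, gauss. replace (- (t * t) * (1 + x * x)) with (- (t * t) + - ((t * x) * (t * x)))
        by ring. rewrite exp_plus. ring.
Qed.

(* The classical invariant: (int_0^t gauss)^2 + J t = pi/4 for every t. *)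
Lemma gauss_invariant t : (E t - E 0) * (E t - E 0) + J t = PI / 4.
Proof.
  rewrite <- J0. replace (J 0) with ((E 0 - E 0) * (E 0 - E 0) + J 0) by ring.
  apply (deriv_zero_const (fun t => (E t - E 0) * (E t - E 0) + J t) 0 t).
  intros x _. eapply dl_plus; [ | apply J_deriv | ].
  - eapply dl_mult; (eapply dl_minus; [apply E_prim | apply dl_const; reflexivity | reflexivity])
      || reflexivity.
  - rewrite dgq_integral. unfold gauss. ring.
Qed.

Lemma E_mono a b : a <= b -> E a <= E b.
Proof.
  intros hab. enough (- E b <= - E a) by lra.
  apply (deriv_nonpos_decr (fun x => - E x) (fun x => - gauss x) a b hab).
  - intros; eapply dl_opp; [apply E_prim | reflexivity].
  - intros; unfold gauss; pose proof (exp_pos (- (x * x))); lra.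
Qed.

Definition half_sqrt_pi := sqrt PI / 2.

Lemma half_sqrt_pi_pos : 0 < half_sqrt_pi.
Proof. unfold half_sqrt_pi. pose proof (sqrt_lt_R0 PI PI_RGT_0). lra. Qed.

Lemma gauss_partial_bound t :
  Rabs (Rabs (E t - E 0) - half_sqrt_pi) <= exp (- (t * t)) / half_sqrt_pi.
Proof.
  pose proof (gauss_invariant t) as F. pose proof (J_bounds t) as [J1 J2].
  pose proof half_sqrt_pi_pos as HS.
  assert (S2 : half_sqrt_pi * half_sqrt_pi = PI / 4)
    by (unfold half_sqrt_pi; pose proof (sqrt_sqrt PI (Rlt_le _ _ PI_RGT_0)); nra).
  set (Y := Rabs (E t - E 0)).
  assert (hY : 0 <= Y) by apply Rabs_pos.
  assert (YY : Y * Y = (E t - E 0) * (E t - E 0)) by (unfold Y; rewrite <- Rabs_mult; apply Rabs_right, Rle_ge, Rle_0_sqr).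
  assert (Y <= half_sqrt_pi).
  { apply Rnot_lt_le. intro.
    assert (half_sqrt_pi * half_sqrt_pi < Y * Y) by (apply Rmult_le_0_lt_compat; lra). lra. }
  assert ((half_sqrt_pi - Y) * half_sqrt_pi <= exp (- (t * t))) by nra.
  rewrite Rabs_left1 by lra.
  apply Rmult_le_reg_r with half_sqrt_pi; auto. unfold Rdiv.
  rewrite Rmult_assoc, Rinv_l by lra. lra.
Qed.
Lemma gauss_right_tail eta b : 0 < eta -> / eta + 1 <= b ->
  Rabs (E b - E 0 - half_sqrt_pi) < eta / half_sqrt_pi.
Proof.
  intros heta hb. pose proof half_sqrt_pi_pos. pose proof (Rinv_0_lt_compat eta heta).
  pose proof (gauss_partial_bound b) as B.
  rewrite (Rabs_right (E b - E 0)) in B by (pose proof (E_mono 0 b); lra).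
  eapply Rle_lt_trans; [exact B|]. apply Rmult_lt_compat_r; [apply Rinv_0_lt_compat; auto|].
  apply exp_neg_sq_small; auto. rewrite Rabs_right; lra.
Qed.

Lemma gauss_left_tail eta a : 0 < eta -> a <= - (/ eta + 1) ->
  Rabs (E a - E 0 + half_sqrt_pi) < eta / half_sqrt_pi.
Proof.
  intros heta ha. pose proof half_sqrt_pi_pos. pose proof (Rinv_0_lt_compat eta heta).
  pose proof (gauss_partial_bound a) as B.
  rewrite (Rabs_left1 (E a - E 0)) in B by (pose proof (E_mono a 0); lra).
  replace (E a - E 0 + half_sqrt_pi) with (- (- (E a - E 0) - half_sqrt_pi)) by ring.
  rewrite Rabs_Ropp. eapply Rle_lt_trans; [exact B|].
  apply Rmult_lt_compat_r; [apply Rinv_0_lt_compat; auto|].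
  apply exp_neg_sq_small; auto. rewrite Rabs_left; lra.
Qed.
End GaussIntegral.

(** * (iii) The log-normal distribution *)

Lemma normal_density_pos mu s2 z : 0 < s2 -> 0 < normal_density mu s2 z.
Proof.
  intros hs. unfold normal_density. apply Rmult_lt_0_compat; [|apply exp_pos].
  apply Rinv_0_lt_compat, sqrt_lt_R0. pose proof PI_RGT_0. nra.
Qed.

Lemma normal_density_cont mu s2 z : continuity_pt (normal_density mu s2) z.
Proof.
  replace (normal_density mu s2)
    with (fun z => / sqrt (2 * PI * s2) * exp (- ((z - mu) * (z - mu)) * / (2 * s2)))
    by (apply functional_extensionality; intros; unfold normal_density; f_equal; f_equal;
        unfold Rdiv; ring).
  eapply cont_of_deriv. deriv_auto; reflexivity.
Qed.

(* Change of variables z = mu + sqrt(2 s2) x: window integrals of the normal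
   density are differences of partial Gaussian integrals. *)
Lemma normal_window_integral mu s2 E : 0 < s2 ->
  (forall x, derivable_pt_lim E x (gauss x)) ->
  forall u v (pr : Riemann_integrable (normal_density mu s2) u v), u <= v ->
  RiemannInt pr = ((E ((v - mu) / sqrt (2 * s2)) - E 0)
                   - (E ((u - mu) / sqrt (2 * s2)) - E 0)) / sqrt PI.
Proof.
  intros hs HE u v pr huv. set (sg := sqrt (2 * s2)).
  assert (hsg : 0 < sg) by (apply sqrt_lt_R0; lra).
  assert (sg2 : sg * sg = 2 * s2) by (apply sqrt_sqrt; lra).
  assert (hpi : 0 < sqrt PI) by (apply sqrt_lt_R0, PI_RGT_0).
  assert (Esq : sqrt (2 * PI * s2) = sqrt PI * sg).
  { unfold sg. rewrite <- sqrt_mult by (pose proof PI_RGT_0; lra). f_equal; ring. }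
  rewrite (RI_FTC _ (fun z => E ((z - mu) / sg) / sqrt PI) u v pr huv);
    [field; lra | intros; apply normal_density_cont |].
  intros x hx. eapply dl_mult; [ | apply dl_const; reflexivity | ].
  - eapply dl_comp with (f := fun z => (z - mu) / sg); [ | apply HE | reflexivity].
    unfold Rdiv. eapply dl_mult; [deriv_auto; reflexivity | apply dl_const; reflexivity | reflexivity].
  - unfold normal_density, gauss. rewrite Esq.
    replace (- ((x - mu) / sg * ((x - mu) / sg))) with (- (x - mu) ^ 2 / (2 * s2))
      by (rewrite <- sg2; field; lra).
    field. lra.
Qed.

Lemma normal_density_mass mu s2 : 0 < s2 -> int_R (normal_density mu s2) 1.
Proof.
  intros hs. destruct (continuous_primitive gauss gauss_cont) as [E HE].
  set (sg := sqrt (2 * s2)).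
  assert (hsg : 0 < sg) by (apply sqrt_lt_R0; lra).
  assert (hpi : 0 < sqrt PI) by (apply sqrt_lt_R0, PI_RGT_0).
  assert (HS : 2 * half_sqrt_pi = sqrt PI) by (unfold half_sqrt_pi; field).
  pose proof half_sqrt_pi_pos.
  split.
  - intros u v huv. constructor. apply continuity_implies_RiemannInt; auto.
    intros; apply normal_density_cont.
  - intros eps heps.
    set (eta := eps * half_sqrt_pi * sqrt PI / 2).
    assert (heta : 0 < eta) by (unfold eta; apply Rdiv_lt_0_compat; [|lra];
      repeat apply Rmult_lt_0_compat; lra).
    exists (Rabs mu + sg * (/ eta + 1) + 1). intros u v pr hu hv huv.
    rewrite (normal_window_integral mu s2 E hs HE u v pr huv). fold sg.
    pose proof (Rle_abs mu). pose proof (Rle_abs (- mu)). rewrite Rabs_Ropp in *.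
    assert (0 < / eta) by (apply Rinv_0_lt_compat; auto).
    set (a := (u - mu) / sg). set (b := (v - mu) / sg).
    assert (Tb : Rabs (E b - E 0 - half_sqrt_pi) < eta / half_sqrt_pi).
    { apply gauss_right_tail; auto. unfold b. apply Rmult_le_reg_r with sg; auto.
      unfold Rdiv. rewrite Rmult_assoc, Rinv_l by lra. nra. }
    assert (Ta : Rabs (E a - E 0 + half_sqrt_pi) < eta / half_sqrt_pi).
    { apply gauss_left_tail; auto. unfold a. apply Rmult_le_reg_r with sg; auto.
      unfold Rdiv. rewrite Rmult_assoc, Rinv_l by lra. nra. }
    replace ((E b - E 0 - (E a - E 0)) / sqrt PI - 1)
      with (((E b - E 0 - half_sqrt_pi) - (E a - E 0 + half_sqrt_pi)) / sqrt PI)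
      by (rewrite <- HS; field; lra).
    unfold Rdiv. rewrite Rabs_mult, (Rabs_right (/ sqrt PI))
      by (left; apply Rinv_0_lt_compat; auto).
    assert (Rabs ((E b - E 0 - half_sqrt_pi) - (E a - E 0 + half_sqrt_pi))
              < 2 * (eta / half_sqrt_pi)).
    { unfold Rminus at 1. eapply Rle_lt_trans; [apply Rabs_triang|]. rewrite Rabs_Ropp. lra. }
    apply Rlt_le_trans with (2 * (eta / half_sqrt_pi) * / sqrt PI).
    + apply Rmult_lt_compat_r; [apply Rinv_0_lt_compat|]; auto.
    + right. unfold eta. field. split; lra.
Qed.

Section LogNormal.
Variables mu s2 m : R.
Hypothesis hs : 0 < s2.

(* log of the density of exp(Z) at y, up to the normalizing constant *)
Definition lognormal_log_density y := - (ln y - mu) ^ 2 / (2 * s2) - ln y.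

Lemma lognormal_density_exp y : 0 < y ->
  normal_density mu s2 (ln y) * / y = / sqrt (2 * PI * s2) * exp (lognormal_log_density y).
Proof.
  intros hy. unfold normal_density, lognormal_log_density, Rminus at 2.
  rewrite exp_plus, exp_Ropp, exp_ln by auto. ring.
Qed.

(* The log-ratio of the densities of exp(Z) at m - t and m + t factors as
   (ln(m+t) - ln(m-t)) q t / (2 s2) with q decreasing in t. *)
Definition lognormal_ratio_factor t := ln (m - t) + ln (m + t) - 2 * mu + 2 * s2.

Lemma lognormal_log_ratio t : 0 <= t < m ->
  lognormal_log_density (m - t) - lognormal_log_density (m + t)
  = (ln (m + t) - ln (m - t)) * lognormal_ratio_factor t / (2 * s2).
Proof. intros ht. unfold lognormal_log_density, lognormal_ratio_factor. field. lra. Qed.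

Lemma lognormal_log_ratio_crossing s : s < m ->
  single_crossing (fun t => lognormal_log_density (m - t) - lognormal_log_density (m + t)) s.
Proof.
  intros hsm t1 t2 h1 h12 h2.
  rewrite !lognormal_log_ratio by lra. intros H.
  assert (K : 0 < / (2 * s2)) by (apply Rinv_0_lt_compat; lra).
  assert (L1 : ln (m - t1) <= ln (m + t1)) by (apply le_ln; lra).
  assert (L2 : ln (m - t2) <= ln (m + t2)) by (apply le_ln; lra).
  assert (Q2 : lognormal_ratio_factor t2 > 0).
  { apply Rnot_le_gt. intro. unfold Rdiv in H.
    assert ((ln (m + t2) - ln (m - t2)) * lognormal_ratio_factor t2 <= 0) by nra. nra. }
  assert (lognormal_ratio_factor t2 <= lognormal_ratio_factor t1).
  { unfold lognormal_ratio_factor. rewrite <- !ln_mult by lra.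
    assert (ln ((m - t2) * (m + t2)) <= ln ((m - t1) * (m + t1))) by (apply le_ln; nra). lra. }
  unfold Rdiv. apply Rle_ge. apply Rmult_le_pos; [apply Rmult_le_pos|]; lra.
Qed.
End LogNormal.

Theorem lognormal_heavy_on_left mu s2 m : 0 < s2 ->
  expect_R (normal_density mu s2) (fun z => exp z) (fun y => y) m ->
  heavy_on_left (expect_R (normal_density mu s2) (fun z => exp z - m)).
Proof.
  intros hs Em.
  assert (Hp : forall z, continuity_pt (normal_density mu s2) z /\ 0 < normal_density mu s2 z)
    by (split; [apply normal_density_cont | apply normal_density_pos; auto]).
  apply (heavy_on_left_ext _ _ (fun g l => proj2 (expect_R_improper _ _ g l))).
  apply (heavy_on_left_of_window_bounds windows_R _ (fun z => exp z)).
  - intros z _. repeat split; try apply Hp. apply derivable_continuous_pt, derivable_pt_exp.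
    left; apply Hp.
  - apply int_R_improper, normal_density_mass; auto.
  - apply expect_R_improper; auto.
  - intros b hb. apply (ev_R_of_right_end _ (ln (2 * m))). intros u v hv huv.
    apply (exp_model_window_bound _ _ 1); auto; try lra.
    + intros z; ring.
    + rewrite Rdiv_1_r; auto.
    + destruct (Rle_dec m (exp u)) as [hmu|hmu].
      { intros t1 t2 h1 h12 h2. replace t1 with t2 by lra. lra. }
      apply (single_crossing_of_log_ratio _
        (fun t => / sqrt (2 * PI * s2) * exp (lognormal_log_density mu s2 (m + t)))
        (fun t => lognormal_log_density mu s2 (m - t) - lognormal_log_density mu s2 (m + t))).
      * intros t ht. pose proof (exp_pos u). rewrite !Rdiv_1_r, !lognormal_density_exp by lra.
        split; [apply Rmult_lt_0_compat; [apply Rinv_0_lt_compat, sqrt_lt_R0;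
          pose proof PI_RGT_0; nra | apply exp_pos]|].
        set (x := lognormal_log_density mu s2 (m - t)).
        set (y := lognormal_log_density mu s2 (m + t)).
        replace (exp x) with (exp y * exp (x - y)) by (rewrite <- exp_plus; f_equal; ring).
        ring.
      * apply lognormal_log_ratio_crossing; pose proof (exp_pos u); lra.
Qed.

Theorem mainTheorem14 :
  (* (i) Gamma(a, lam): density C y^(a-1) e^(-lam y) on (0,oo), C its normalizing constant *)
  (forall a lam C m : R, 0 < a -> 0 < lam -> 0 < C ->
     int_pos (gamma_density C a lam) 1 ->
     expect_pos (gamma_density C a lam) (fun y => y) (fun y => y) m ->
     heavy_on_left (expect_pos (gamma_density C a lam) (fun y => y - m))) /\
  (* (ii) Pareto: Y = a exp(Z), Z ~ Exp(lam), when Y is integrable *)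
  (forall a lam m : R, 0 < a -> 0 < lam ->
     expect_pos (exp_density lam) (fun z => a * exp z) (fun y => y) m ->
     heavy_on_left (expect_pos (exp_density lam) (fun z => a * exp z - m))) /\
  (* (iii) log-normal: Y = exp(Z), Z ~ N(mu, s2) *)
  (forall mu s2 m : R, 0 < s2 ->
     expect_R (normal_density mu s2) (fun z => exp z) (fun y => y) m ->
     heavy_on_left (expect_R (normal_density mu s2) (fun z => exp z - m))).
Proof.
  split; [|split].
  - intros a lam C m _ hlam hC. apply gamma_heavy_on_left; auto.
  - exact pareto_heavy_on_left.
  - exact lognormal_heavy_on_left.
Qed.
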